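(* Fix an integer $m\ge 1$ and consider multiple-choice questions $x$ with $m$ answer options, drawn at random, each with a unique correct answer $y^\star\in\{1,\dots,m\}$. Let $C(x)\subseteq\{1,\dots,m\}$ be a (random) prediction set, let $\nu(x)=|C(x)|$, and let $\hat y'$ denote the final answer produced by the revision procedure (CROQ) described in the context, where a final answer can be correct only if $y^\star\in C(x)$ and $\nu(x)\ge 1$. Let $a=\Pr(\hat y=y^\star)$ be the accuracy of the original single-round answer $\hat y$, and for $k=1,\dots,m$ define $r_k=\Pr(\nu(x)=k)$, $\rho_k=\Pr(y^\star\in C(x)\mid \nu(x)=k)$ and $f_{\mathrm{post}}(k)=\Pr(\hat y'=y^\star\mid \nu(x)=k,\ y^\star\in C(x))$. Then: (1) The change in accuracy due to CROQ equals $$\Delta(f_{\mathrm{post}},\alpha,a):=\Pr(\hat y'=y^\star)-a=\sum_{k=1}^m r_k\rho_k f_{\mathrm{post}}(k)-a.$$ (2) A sufficient condition for $\Delta(f_{\mathrm{post}},\alpha,a)>0$ is that $r_k\rho_k>\dfrac{a}{m\,f_{\mathrm{post}}(k)}$ for all $1\le k\le m$. (3) Suppose the function $f_{\mathrm{post}}$ is held fixed and is monotonically decreasing in $k$. Then among all collections of pairs $\{(r_k,\rho_k)\}_{k=1}^m$ with $r_k\ge 0$, $\rho_k\in[0,1]$, $\sum_{k=1}^m r_k\le 1$ and $1-\alpha\le\sum_{k=1}^m r_k\rho_k\le 1$, the quantity $\sum_{k=1}^m r_k\rho_k f_{\mathrm{post}}(k)-a$ is maximized by the greedy choice that makes $r_1\rho_1$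 as large as possible, then $r_2\rho_2$ as large as possible given that, and so on; in particular the maximizer satisfies $r_1\rho_1\ge r_2\rho_2\ge\cdots\ge r_m\rho_m$.
   Context: Setting (conformal revision of questions, CROQ): an LLM answers a multiple-choice question $x$ with $m$ options; its standard answer $\hat y$ is the option with the highest softmax score over the option-key tokens. A conformal prediction set $C(x)=\{y: g(x,y)\ge\hat\tau_\alpha\}$ is computed from a score function $g$ and a threshold $\hat\tau_\alpha$ calibrated by split conformal prediction at miscoverage level $\alpha\in[0,1]$, so that $\Pr(y^\star\in C(x))\ge 1-\alpha$. CROQ then rewrites the question keeping only the options in $C(x)$ (relabelled) and takes the LLM's answer $\hat y'$ to the revised question; thus the final answer is an element of $C(x)$ and is correct only when $y^\star\in C(x)$ (empty sets never yield a correct answer). The parameter $\alpha$ enters only through the constraint $\sum_k r_k\rho_k\ge 1-\alpha$ on the coverage. *)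

From HB Require Import structures.
From mathcomp Require Import all_boot all_order all_algebra.
From mathcomp Require Import all_classical all_reals all_analysis.
Set Implicit Arguments. Unset Strict Implicit. Unset Printing Implicit Defensive.
Import Order.TTheory GRing.Theory Num.Theory.
Local Open Scope classical_set_scope.
Local Open Scope ring_scope.

Section CROQ.
Context {R : realType} {d : measure_display} {T : measurableType d}.

Definition Pr (P : probability T R) (A : set T) : R := fine (P A).

(* conditional probability Pr(A | B) = Pr(A /\ B) / Pr(B)
   (MathComp convention: x / 0 = 0, so it is 0 when Pr(B) = 0) *)
Definition condPr (P : probability T R) (A B : set T) : R :=
  Pr P (A `&` B) / Pr P B.

Context {m : nat}.

(* index k : 'I_m stands for the set size k.+1 (i.e. k = 1..m in the paper) *)
Definition ev_size (C : T -> {set 'I_m}) (k : 'I_m) : set T :=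
  [set w | #|C w| = k.+1]%N.
Definition ev_cover (ystar : T -> 'I_m) (C : T -> {set 'I_m}) : set T :=
  [set w | ystar w \in C w].
Definition ev_correct (yhat ystar : T -> 'I_m) : set T :=
  [set w | yhat w = ystar w].

Definition r_k (P : probability T R) (C : T -> {set 'I_m}) (k : 'I_m) : R :=
  Pr P (ev_size C k).
Definition rho_k (P : probability T R) (ystar : T -> 'I_m)
  (C : T -> {set 'I_m}) (k : 'I_m) : R :=
  condPr P (ev_cover ystar C) (ev_size C k).
Definition fpost (P : probability T R) (ystar yhat' : T -> 'I_m)
  (C : T -> {set 'I_m}) (k : 'I_m) : R :=
  condPr P (ev_correct yhat' ystar) (ev_size C k `&` ev_cover ystar C).

Definition feasible (alpha : R) (r rho : 'I_m -> R) : Prop :=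
  [/\ (forall k, 0 <= r k), (forall k, 0 <= rho k <= 1),
      \sum_(k < m) r k <= 1 &
      1 - alpha <= \sum_(k < m) r k * rho k <= 1].

Definition objective (f : 'I_m -> R) (a : R) (r rho : 'I_m -> R) : R :=
  \sum_(k < m) r k * rho k * f k - a.

Definition greedy (alpha : R) (r rho : 'I_m -> R) : Prop :=
  feasible alpha r rho /\
  forall k : 'I_m, forall r' rho' : 'I_m -> R, feasible alpha r' rho' ->
    (forall j : 'I_m, (j < k)%N -> r' j * rho' j = r j * rho j) ->
    r' k * rho' k <= r k * rho k.
End CROQ.

From HB Require Import structures.
From mathcomp Require Import all_boot all_order all_algebra.
From mathcomp Require Import all_classical all_reals all_analysis.
Import Order.TTheory GRing.Theory Num.Theory.
Local Open Scope classical_set_scope.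
Local Open Scope ring_scope.

(** Part (1) is the law of total probability over the partition of the
    sample space by the size |C(x)| = k, together with the chain rule
    Pr(A & C & B) = Pr(C) Pr(B | C) Pr(A | C & B): since a correct revised
    answer lies in C(x), {y' = y*} & {|C| = k} = {y' = y*} & {|C| = k} & {y* in C}.
    Part (2) compares the sum termwise with m copies of a / m.
    For part (3), r_1 = rho_1 = 1 (all other r_k = 0) is feasible, so the first
    greedy step forces r_1 rho_1 = 1; as the products r_k rho_k are nonnegative
    with sum at most 1, all others vanish.  The objective of the greedy choice is
    thus f(1) - a, while any feasible choice gives at most
    (sum_k r_k rho_k) f(1) - a <= f(1) - a because f is nonincreasing and
    f(1) >= 0. *)

Set Implicit Arguments.

Section measurable_fin_valued.
Context {d : measure_display} {T : measurableType d}.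

Lemma measurable_fin_pred {X : finType} {h : T -> X} (Q : X -> Prop) :
  (forall x, measurable [set w | h w = x]) -> measurable [set w | Q (h w)].
Proof.
move=> mh; have -> : [set w | Q (h w)] = \bigcup_(x in Q) [set w | h w = x].
  by apply/seteqP; split=> w /=; [exists (h w) | case=> x /= ? ->].
by apply: fin_bigcup_measurable => //; exact: finite_finset.
Qed.

Lemma measurable_fin_pred2 {X Y : finType} {h1 : T -> X} {h2 : T -> Y}
    (Q : X -> Y -> Prop) :
  (forall x, measurable [set w | h1 w = x]) ->
  (forall y, measurable [set w | h2 w = y]) ->
  measurable [set w | Q (h1 w) (h2 w)].
Proof.
move=> mh1 mh2; apply: (@measurable_fin_pred _ (fun w => (h1 w, h2 w))
  (fun p => Q p.1 p.2)) => -[x y].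
have -> : [set w | (h1 w, h2 w) = (x, y)] =
    [set w | h1 w = x] `&` [set w | h2 w = y].
  by apply/seteqP; split=> w /=; [case=> -> -> | case=> -> ->].
exact: measurableI.
Qed.

End measurable_fin_valued.

Lemma mulr_div_chain {R : numFieldType} (a b c : R) :
  0 <= c <= b -> b <= a -> a * (b / a) * (c / b) = c.
Proof.
move=> /andP[c_ge0 cb] ba; have [b0|b_neq0] := eqVneq b 0.
  have c0 : c = 0 by apply/le_anti; rewrite c_ge0 -b0 cb.
  by rewrite b0 c0 !mul0r mulr0.
have b_gt0 : 0 < b by rewrite lt_neqAle eq_sym b_neq0 (le_trans c_ge0 cb).
have a_neq0 : a != 0 by rewrite gt_eqF // (lt_le_trans b_gt0 ba).
by rewrite (mulrC a) divfK // (mulrC b) divfK.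
Qed.

Section probability_facts.
Context {R : realType} {d : measure_display} {T : measurableType d}.
Variable P : probability T R.

Lemma Pr_ge0 A : 0 <= Pr P A.
Proof. exact/fine_ge0/measure_ge0. Qed.

Lemma PrE A : measurable A -> (Pr P A)%:E = P A.
Proof. by move=> mA; rewrite fineK // fin_num_measure. Qed.

Lemma le_Pr A B : measurable A -> measurable B -> A `<=` B -> Pr P A <= Pr P B.
Proof.
by move=> mA mB AB; rewrite -lee_fin !PrE //; apply: le_measure; rewrite ?inE.
Qed.

Lemma Pr_partition {m : nat} {A : 'I_m -> set T} {B : set T} :
  measurable B -> (forall k, measurable (A k)) -> trivIset setT A ->
  B `<=` \bigcup_k A k ->
  Pr P B = \sum_(k < m) Pr P (B `&` A k).
Proof.
move=> mB mA A_disj B_sub; have mBA k : measurable (B `&` A k).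
  exact: measurableI.
have B_cover : B = \bigcup_(k in [set: 'I_m]) (B `&` A k).
  apply/seteqP; split=> [w Bw|w [k _ []//]].
  by have [k _ Akw] := B_sub w Bw; exists k.
apply: EFin_inj; rewrite PrE // {1}B_cover measure_fin_bigcup //; last 2 first.
- exact: finite_finset.
- exact: trivIset_setIl.
rewrite (fsbigE (enum 'I_m)) ?enum_uniq //; last by move=> i _; rewrite mem_enum.
under eq_bigl do rewrite in_setT.
by rewrite big_enum /= -sumEFin; apply: eq_bigr => k _; rewrite PrE.
Qed.

Lemma condPr_chain A B C : measurable A -> measurable B -> measurable C ->
  Pr P C * condPr P B C * condPr P A (C `&` B) = Pr P (A `&` (C `&` B)).
Proof.
move=> mA mB mC; have mCB := measurableI _ _ mC mB.
rewrite /condPr (setIC B) mulr_div_chain ?Pr_ge0 //=.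
- exact: le_Pr (measurableI _ _ mA mCB) mCB (@subIsetr _ _ _).
- exact: le_Pr mCB mC (@subIsetl _ _ _).
Qed.

End probability_facts.

Section croq_events.
Context (R : realType) (d : measure_display) (T : measurableType d).
Variables (P : probability T R) (m : nat).
Variables (ystar yhat' : T -> 'I_m) (C : T -> {set 'I_m}).
Hypothesis mystar : forall i, measurable [set w | ystar w = i].
Hypothesis myhat' : forall i, measurable [set w | yhat' w = i].
Hypothesis mC : forall S, measurable [set w | C w = S].

Lemma measurable_ev_size k : measurable (ev_size C k).
Proof. exact: (measurable_fin_pred (fun S : {set 'I_m} => #|S| = k.+1)%N mC). Qed.

Lemma measurable_ev_cover : measurable (ev_cover ystar C).
Proof. exact: (measurable_fin_pred2 (fun y (S : {set 'I_m}) => y \in S) mystar mC). Qed.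

Lemma measurable_ev_correct : measurable (ev_correct yhat' ystar).
Proof. exact: (measurable_fin_pred2 (fun y y' => y = y') myhat' mystar). Qed.

Lemma trivIset_ev_size : trivIset setT (ev_size C).
Proof.
move=> i j _ _ [w [/= Ci Cj]]; apply: val_inj.
by apply/succn_inj; rewrite -Ci -Cj.
Qed.

Lemma ev_cover_sub_size : ev_cover ystar C `<=` \bigcup_k ev_size C k.
Proof.
move=> w /= Cw; have Cw_gt0 : (0 < #|C w|)%N by apply/card_gt0P; exists (ystar w).
have Cw_lt : (#|C w|.-1 < m)%N.
  by rewrite prednK // -[X in (_ <= X)%N]card_ord max_card.
by exists (Ordinal Cw_lt) => //; rewrite /ev_size /= prednK.
Qed.

Hypothesis correct_sub_cover : ev_correct yhat' ystar `<=` ev_cover ystar C.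

Lemma Pr_ev_correct : Pr P (ev_correct yhat' ystar) =
  \sum_(k < m) r_k P C k * rho_k P ystar C k * fpost P ystar yhat' C k.
Proof.
rewrite (Pr_partition P measurable_ev_correct measurable_ev_size
  trivIset_ev_size); last exact: subset_trans ev_cover_sub_size.
apply: eq_bigr => k _; rewrite condPr_chain; last 3 first.
- exact: measurable_ev_correct.
- exact: measurable_ev_cover.
- exact: measurable_ev_size.
by rewrite setIA setIAC (setIidl correct_sub_cover).
Qed.

End croq_events.

Lemma lt_sum_mul_of_lt_div {R : numFieldType} {m : nat} (a : R) (x f : 'I_m -> R) :
  (0 < m)%N -> (forall k, 0 < f k) -> (forall k, a / (m%:R * f k) < x k) ->
  a < \sum_(k < m) x k * f k.
Proof.
move=> m_gt0 f_gt0 x_gt; have m_neq0 : m%:R != 0 :> R by rewrite pnatr_eq0 -lt0n.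
have -> : a = \sum_(k < m) a / m%:R.
  by rewrite sumr_const card_ord -[RHS]mulr_natr divfK.
apply: ltr_sum => [|k _]; first by apply/hasP; exists (Ordinal m_gt0); rewrite ?mem_index_enum.
by have := x_gt k; rewrite invfM mulrA ltr_pdivrMr.
Qed.

Lemma point_mass_of_sum_le1 {R : numDomainType} {I : finType} (x : I -> R) i :
  (forall j, 0 <= x j) -> \sum_j x j <= 1 -> 1 <= x i -> forall j, x j = (j == i)%:R.
Proof.
move=> x_ge0 sum_le1 xi_ge1.
have sum_split : \sum_j x j = x i + \sum_(j | j != i) x j by rewrite (bigD1 i).
have rest_ge0 : 0 <= \sum_(j | j != i) x j by apply: sumr_ge0.
have xi_eq1 : x i = 1.
  by apply/le_anti; rewrite xi_ge1 andbT (le_trans _ sum_le1) // sum_split lerDl.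
have rest_le0 : \sum_(j | j != i) x j <= 0.
  by rewrite -(lerD2l 1) addr0 -{1}xi_eq1 -sum_split.
move=> j; have [->|ji] := eqVneq j i; first by rewrite xi_eq1.
apply/le_anti; rewrite x_ge0 andbT (le_trans _ rest_le0) // (bigD1 j) //=.
by rewrite lerDl sumr_ge0.
Qed.

Section greedy_optimum.
Context {R : realType} {m : nat}.
Variables (alpha : R) (m_gt0 : (0 < m)%N).
Hypothesis alpha_ge0 : 0 <= alpha.
Implicit Types (r rho g : 'I_m -> R) (a : R).

Lemma feasible_mul_ge0 r rho : feasible alpha r rho -> forall k, 0 <= r k * rho k.
Proof. by case=> r_ge0 rho01 _ _ k; rewrite mulr_ge0 // (andP (rho01 k)).1. Qed.

Lemma feasible_sum_mul_le1 r rho : feasible alpha r rho -> \sum_k r k * rho k <= 1.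
Proof. by case=> _ _ _ /andP[]. Qed.

Lemma feasible_mul_le1 r rho : feasible alpha r rho -> forall k, r k * rho k <= 1.
Proof.
move=> feas k; rewrite (le_trans _ (feasible_sum_mul_le1 feas)) // (bigD1 k) //=.
by rewrite lerDl sumr_ge0 // => j _; exact: feasible_mul_ge0.
Qed.

Let i0 : 'I_m := Ordinal m_gt0.

Definition first_mass (k : 'I_m) : R := (k == i0)%:R.

Lemma sum_first_mass (F : 'I_m -> R) : \sum_k first_mass k * F k = F i0.
Proof.
rewrite (bigD1 i0) //= /first_mass eqxx mul1r big1 ?addr0 // => k /negbTE ->.
by rewrite mul0r.
Qed.

Lemma first_mass_nonincreasing (i j : 'I_m) : (i <= j)%N -> first_mass j <= first_mass i.
Proof.
move=> ij; rewrite /first_mass; have [ji0|] := eqVneq j i0; last by rewrite ler0n.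
suff -> : i = i0 by [].
by apply: val_inj; apply/eqP; rewrite -leqn0 (leq_trans ij) // ji0.
Qed.

Lemma feasible_first_mass : feasible alpha first_mass (fun _ => 1).
Proof.
split=> [k|k||]; first by rewrite ler0n.
- by rewrite ler01 lexx.
- by under eq_bigr do rewrite -[first_mass _]mulr1; rewrite sum_first_mass.
- by rewrite sum_first_mass lexx andbT gerBl.
Qed.

Lemma feasible_first_massE r rho : feasible alpha r rho ->
  1 <= r i0 * rho i0 -> forall k, r k * rho k = first_mass k.
Proof.
move=> feas ge1; apply: (point_mass_of_sum_le1 (fun k => r k * rho k)) => //.
- exact: feasible_mul_ge0.
- exact: feasible_sum_mul_le1.
Qed.

Lemma greedy_first_mass : greedy alpha first_mass (fun _ => 1).
Proof.
split=> [|k r' rho' feas' agree]; first exact: feasible_first_mass.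
rewrite mulr1; have [->|k_neq0] := eqVneq k i0.
  by rewrite /first_mass eqxx; exact: feasible_mul_le1.
have k_gt0 : (i0 < k)%N.
  by rewrite lt0n; apply: contra k_neq0 => /eqP k0; apply/eqP/val_inj.
rewrite (feasible_first_massE feas') //.
by rewrite (agree _ k_gt0) /first_mass eqxx mulr1.
Qed.

Lemma greedy_first_massE r rho : greedy alpha r rho ->
  forall k, r k * rho k = first_mass k.
Proof.
case=> feas greedy_max; apply: feasible_first_massE => //.
have := greedy_max i0 _ _ feasible_first_mass.
by rewrite /first_mass eqxx mulr1; apply=> j; rewrite ltn0.
Qed.

Lemma objective_first_mass {r rho} g a : (forall k, r k * rho k = first_mass k) ->
  objective g a r rho = g i0 - a.
Proof.
by move=> rhoE; rewrite /objective; under eq_bigr do rewrite rhoE; rewrite sum_first_mass.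
Qed.

Lemma objective_le_first r rho g a : feasible alpha r rho ->
  0 <= g i0 -> (forall k, g k <= g i0) -> objective g a r rho <= g i0 - a.
Proof.
move=> feas g0_ge0 g_le; rewrite lerD2r.
apply: (@le_trans _ _ (\sum_k r k * rho k * g i0)).
  by apply: ler_sum => k _; rewrite ler_wpM2l // feasible_mul_ge0.
by rewrite -mulr_suml ler_piMl // feasible_sum_mul_le1.
Qed.

End greedy_optimum.

Theorem proposition2 (R : realType) (d : measure_display) (T : measurableType d)
  (P : probability T R) (m : nat) (hm : (0 < m)%N)
  (ystar yhat yhat' : T -> 'I_m) (C : T -> {set 'I_m})
  (mystar : forall i : 'I_m, measurable [set w | ystar w = i])
  (myhat : forall i : 'I_m, measurable [set w | yhat w = i])
  (myhat' : forall i : 'I_m, measurable [set w | yhat' w = i])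
  (mC : forall S : {set 'I_m}, measurable [set w | C w = S])
  (hcorrect : forall w, yhat' w = ystar w -> ystar w \in C w)
  (alpha : R) (halpha : 0 <= alpha <= 1) :
  let a := Pr P (ev_correct yhat ystar) in
  let r := r_k P C in
  let rho := rho_k P ystar C in
  let f := fpost P ystar yhat' C in
  (* (1) *)
  Pr P (ev_correct yhat' ystar) - a = \sum_(k < m) r k * rho k * f k - a
  (* (2) *)
  /\ ((forall k, 0 < f k) ->
      (forall k, a / (m%:R * f k) < r k * rho k) ->
      0 < Pr P (ev_correct yhat' ystar) - a)
  (* (3) *)
  /\ (forall g : 'I_m -> R,
        (forall k, 0 <= g k <= 1) ->
        (forall i j : 'I_m, (i <= j)%N -> g j <= g i) ->
        (exists r0 rho0 : 'I_m -> R, greedy alpha r0 rho0) /\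
        forall r0 rho0 : 'I_m -> R, greedy alpha r0 rho0 ->
          (forall r' rho' : 'I_m -> R, feasible alpha r' rho' ->
             objective g a r' rho' <= objective g a r0 rho0) /\
          (forall i j : 'I_m, (i <= j)%N -> r0 j * rho0 j <= r0 i * rho0 i)).
Proof.
move=> a r rho f; have Pr_correct := Pr_ev_correct P mystar myhat' mC hcorrect.
split; first by rewrite Pr_correct.
split=> [f_gt0 a_lt|g g01 g_nonincr].
  by rewrite Pr_correct subr_gt0; exact: lt_sum_mul_of_lt_div.
have alpha_ge0 : 0 <= alpha by case/andP: halpha.
split=> [|r0 rho0 greedy0].
  by exists (first_mass hm), (fun _ => 1); exact: greedy_first_mass.
have r0E := greedy_first_massE hm alpha_ge0 greedy0.
split=> [r' rho' feas'|i j ij]; last by rewrite !r0E first_mass_nonincreasing.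
rewrite (objective_first_mass hm _ _ r0E); apply: objective_le_first feas' _ _.
- by case/andP: (g01 (Ordinal hm)).
- by move=> k; apply: g_nonincr.
Qed.
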